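(* For every finite alphabet $\Sigma$ with $|\Sigma| \geq 2$, the group $\mathrm{Aut}(\Sigma^\mathbb{Z})$ does not satisfy the Tits alternative. That is, there is a finitely generated subgroup of $\mathrm{Aut}(\Sigma^\mathbb{Z})$ which is not virtually solvable and contains no free group on two generators.
   Context: $\Sigma^\mathbb{Z}$ carries the product topology and the shift $\sigma(x)_i = x_{i+1}$. $\mathrm{Aut}(\Sigma^\mathbb{Z})$ is the group of homeomorphisms $f:\Sigma^\mathbb{Z}\to\Sigma^\mathbb{Z}$ with $f\circ\sigma=\sigma\circ f$ (the group of reversible cellular automata). A group $G$ satisfies the Tits alternative if every finitely generated subgroup $H \le G$ is either virtually solvable (has a solvable subgroup of finite index) or contains a free group on two generators. *)

From Stdlib Require Import ZArith List.
From mathcomp Require Import all_boot.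
Set Implicit Arguments. Unset Strict Implicit. Unset Printing Implicit Defensive.

Definition config (S : Type) := Z -> S.

Definition shift (S : Type) (x : config S) : config S := fun i => x (i + 1)%Z.

Definition agree (S : Type) (n : nat) (x y : config S) : Prop :=
  forall i : Z, (- Z.of_nat n <= i <= Z.of_nat n)%Z -> x i = y i.

(* Continuity for the product topology on S^Z (S discrete): the cylinder
   sets over centered windows form a neighbourhood basis. *)
Definition continuous (S : Type) (f : config S -> config S) : Prop :=
  forall (x : config S) (n : nat), exists m : nat,
    forall y : config S, agree m x y -> agree n (f x) (f y).

Definition is_aut (S : Type) (f : config S -> config S) : Prop :=
  (exists g : config S -> config S,
      cancel f g /\ cancel g f /\ continuous f /\ continuous g)
  /\ (forall x, f (shift x) = shift (f x)).

Section GroupTheory.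
Variable T : Type.
Notation fn := (T -> T).

Inductive gen (A : fn -> Prop) : fn -> Prop :=
| gen_id : gen A id
| gen_mul : forall a b, A a -> gen A b -> gen A (a \o b)
| gen_mulinv : forall a a' b, A a -> cancel a a' -> cancel a' a ->
    gen A b -> gen A (a' \o b).

Definition gen_list (l : list fn) : fn -> Prop := gen (fun f => In f l).

Definition is_subgroup (K : fn -> Prop) : Prop :=
  K id /\ (forall a b, K a -> K b -> K (a \o b)) /\
  (forall a, K a -> exists a', cancel a a' /\ cancel a' a /\ K a').

Definition commutators (D : fn -> Prop) : fn -> Prop :=
  fun c => exists a a' b b', D a /\ D b /\ cancel a a' /\ cancel a' a /\
    cancel b b' /\ cancel b' b /\ c = a' \o b' \o a \o b.

Definition derived (D : fn -> Prop) : fn -> Prop := gen (commutators D).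

Fixpoint derived_iter (n : nat) (D : fn -> Prop) : fn -> Prop :=
  match n with 0 => D | n'.+1 => derived (derived_iter n' D) end.

Definition solvable_grp (K : fn -> Prop) : Prop :=
  exists n, forall k, derived_iter n K k -> k = id.

Definition finite_index (K H : fn -> Prop) : Prop :=
  exists l : list fn, forall h, H h -> exists r k, In r l /\ K k /\ h = r \o k.

Definition virtually_solvable (H : fn -> Prop) : Prop :=
  exists K, is_subgroup K /\ (forall k, K k -> H k) /\
    finite_index K H /\ solvable_grp K.

(* words over {a, b}^{+-1}: letter (g, s), g = false for a, true for b;
   s = true for the inverse *)
Definition letter := (bool * bool)%type.

Fixpoint reduced (w : list letter) : Prop :=
  match w with
  | l1 :: ((l2 :: _) as w') =>
      ~ (l1.1 = l2.1 /\ l1.2 = ~~ l2.2) /\ reduced w'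
  | _ => True
  end.

Definition eval_letter (a a' b b' : fn) (l : letter) : fn :=
  match l with
  | (false, false) => a | (false, true) => a'
  | (true, false) => b | (true, true) => b' end.

Fixpoint eval_word (a a' b b' : fn) (w : list letter) : fn :=
  match w with
  | nil => id
  | l :: w' => eval_letter a a' b b' l \o eval_word a a' b b' w'
  end.

Definition contains_free2 (H : fn -> Prop) : Prop :=
  exists a a' b b', H a /\ H b /\ cancel a a' /\ cancel a' a /\
    cancel b b' /\ cancel b' b /\
    forall w : list letter, w <> nil -> reduced w -> eval_word a a' b b' w <> id.

End GroupTheory.

(* The group is generated by a conveyor belt [belt] and the maps [controlled g], g in A5.
   Configurations are read through frames, 14-cell patterns that no generator creates or
   destroys.  Each frame has two lane cells, which together form a two-lane belt rotated
   by [belt], and three cells holding a point of {0,...,4}, to which [controlled g] applies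
   g when its upper lane cell carries [one].

   Every element of the group is a field of A5-elements acting frame by frame, composed
   with a power of the belt, its degree.  A commutator has degree 0, so its 30th power is
   trivial (30 is the exponent of A5): the group has no free subgroup.

   A subgroup K of finite index contains a power [belt_pow J], J > 0.  By pigeonhole on
   products of conjugates of [controlled g] by powers of [belt_pow J], K also contains, for
   every g in A5, an element acting as g on the point of frame 0 of every configuration
   whose upper lane, at the positions that are multiples of J, carries [one] only at 0.
   As every element of A5 is a commutator, the same holds in each derived subgroup of K,
   so K is not solvable. *)

From Stdlib Require Import ZArith List Lia FunctionalExtensionality Classical.
From mathcomp Require Import all_boot zify.
Set Implicit Arguments. Unset Strict Implicit. Unset Printing Implicit Defensive.

Lemma pigeonhole_list (A : Type) (l : list A) (P : nat -> A -> Prop) :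
  (forall N, N <= length l -> exists r, In r l /\ P N r) ->
  exists N1 N2 r, [/\ N1 < N2, In r l, P N1 r & P N2 r].
Proof.
elim: l P => [|a l IH] P h; first by have [r [[] _]] := h 0 (leqnn 0).
case: (classic (exists N1 N2, [/\ N1 < N2, N2 <= (length l).+1, P N1 a & P N2 a])).
  by case=> N1 [N2 [lt _ p1 p2]]; exists N1, N2, a; split => //; left.
move=> no_pair.
case: (classic (exists2 N0, N0 <= (length l).+1 & P N0 a)) => [[N0 hN0 pN0]|none].
- pose f N := if N < N0 then N else N.+1.
  have hf N : N <= length l -> exists r, In r l /\ P (f N) r.
    move=> hN; have hfN : f N <= (length l).+1 by rewrite /f; case: ifP; lia.
    have [r [[<-|hr] pr]] := h (f N) hfN; last by exists r.
    exfalso; apply: no_pair; case: (ltngtP (f N) N0) => lt.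
    + by exists (f N), N0; split.
    + by exists N0, (f N); split.
    + by move: lt; rewrite /f; case: ifP; lia.
  have [N1 [N2 [r [lt r_in p1 p2]]]] := IH _ hf.
  exists (f N1), (f N2), r; split => //; last by right.
  by rewrite /f; do 2 case: ifP; lia.
- have hf N : N <= length l -> exists r, In r l /\ P N r.
    move=> hN; have [r [[<-|hr] pr]] := h N (leqW hN); last by exists r.
    by exfalso; apply: none; exists N; first exact: leqW.
  have [N1 [N2 [r [lt r_in p1 p2]]]] := IH P hf.
  by exists N1, N2, r; split => //; right.
Qed.

Section FunctionGroups.
Variable T : Type.
Implicit Types (f h k r : T -> T) (K H : (T -> T) -> Prop).

Lemma gen_comp A f h : gen A f -> gen A h -> gen A (f \o h).
Proof.
move=> hf hh; elim: hf => [|a b ha _ IH|a a' b ha aK aK' _ IH]; first exact: hh.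
  exact: gen_mul ha IH.
exact: gen_mulinv ha aK aK' IH.
Qed.

Lemma gen_iter A f n : gen A f -> gen A (iter n f).
Proof. by move=> hf; elim: n => [|n IH] /=; [exact: gen_id | exact: gen_comp hf IH]. Qed.

(* Two elements of the same left coset [r K] differ by an element of [K]. *)
Lemma same_coset_quotient r k1 k2 k1' h f :
  cancel k1 k1' -> cancel k1' k1 -> injective h ->
  r \o k1 =1 h -> r \o k2 =1 h \o f -> k1' \o k2 =1 f.
Proof.
move=> k1K k1K' h_inj e1 e2 c.
have r_inj : injective r.
  by move=> y z e; rewrite -(k1K' y) -(k1K' z); congr k1; apply: h_inj; rewrite -!e1 /= !k1K'.
have : r (k2 c) = r (k1 (f c)) by rewrite [LHS]e2 [RHS]e1.
by move/r_inj => /= ->; rewrite k1K.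
Qed.

Lemma finite_index_collision K H (hN : nat -> T -> T) :
  finite_index K H -> (forall N, H (hN N)) ->
  exists N1 N2 r k1 k2, [/\ N1 < N2, K k1, K k2, hN N1 = r \o k1 & hN N2 = r \o k2].
Proof.
move=> [l cover] hH.
have [|N1 [N2 [r [lt _ [k1 [Kk1 e1]] [k2 [Kk2 e2]]]]]] :=
  @pigeonhole_list _ l (fun N r => exists k, K k /\ hN N = r \o k).
  by move=> N _; have [r [k [r_in [Kk e]]]] := cover _ (hH N); exists r; split => //; exists k.
by exists N1, N2, r, k1, k2.
Qed.

End FunctionGroups.

Definition perm5 := seq nat.
Definition pcomp (p q : perm5) : perm5 := map (fun j => nth 0 p (nth 0 q j)) (iota 0 5).
Definition pid : perm5 := iota 0 5.
Definition ppow (p : perm5) n := iter n (pcomp p) pid.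
Definition pinv (p : perm5) : perm5 := map (fun j => index j p) (iota 0 5).
Definition pcomm x y := pcomp (pinv x) (pcomp (pinv y) (pcomp x y)).
Definition pvalid (p : perm5) := all (fun j => j < 5) p.

Definition A5 : seq perm5 := [:: [:: 0; 1; 2; 3; 4]; [:: 0; 1; 3; 4; 2]; [:: 0; 1; 4; 2; 3]; [:: 0; 2; 1; 4; 3]; [:: 0; 2; 3; 1; 4]; [:: 0; 2; 4; 3; 1]; [:: 0; 3; 1; 2; 4]; [:: 0; 3; 2; 4; 1]; [:: 0; 3; 4; 1; 2]; [:: 0; 4; 1; 3; 2]; [:: 0; 4; 2; 1; 3]; [:: 0; 4; 3; 2; 1]; [:: 1; 0; 2; 4; 3]; [:: 1; 0; 3; 2; 4]; [:: 1; 0; 4; 3; 2]; [:: 1; 2; 0; 3; 4]; [:: 1; 2; 3; 4; 0]; [:: 1; 2; 4; 0; 3]; [:: 1; 3; 0; 4; 2]; [:: 1; 3; 2; 0; 4]; [:: 1; 3; 4; 2; 0]; [:: 1; 4; 0; 2; 3]; [:: 1; 4; 2; 3; 0]; [:: 1; 4; 3; 0; 2]; [:: 2; 0; 1; 3; 4]; [:: 2; 0; 3; 4; 1]; [:: 2; 0; 4; 1; 3]; [:: 2; 1; 0; 4; 3]; [:: 2; 1; 3; 0; 4]; [:: 2; 1; 4; 3; 0]; [:: 2; 3; 0; 1; 4]; [:: 2; 3; 1; 4; 0]; [:: 2; 3; 4; 0; 1]; [:: 2; 4; 0; 3; 1]; [:: 2; 4; 1; 0; 3]; [:: 2; 4;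 3; 1; 0]; [:: 3; 0; 1; 4; 2]; [:: 3; 0; 2; 1; 4]; [:: 3; 0; 4; 2; 1]; [:: 3; 1; 0; 2; 4]; [:: 3; 1; 2; 4; 0]; [:: 3; 1; 4; 0; 2]; [:: 3; 2; 0; 4; 1]; [:: 3; 2; 1; 0; 4]; [:: 3; 2; 4; 1; 0]; [:: 3; 4; 0; 1; 2]; [:: 3; 4; 1; 2; 0]; [:: 3; 4; 2; 0; 1]; [:: 4; 0; 1; 2; 3]; [:: 4; 0; 2; 3; 1]; [:: 4; 0; 3; 1; 2]; [:: 4; 1; 0; 3; 2]; [:: 4; 1; 2; 0; 3]; [:: 4; 1; 3; 2; 0]; [:: 4; 2; 0; 1; 3]; [:: 4; 2; 1; 3; 0]; [:: 4; 2; 3; 0; 1]; [:: 4; 3; 0; 2; 1]; [:: 4; 3; 1; 0; 2]; [:: 4; 3; 2; 1; 0]].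

Lemma A5_table :
  [/\ pid \in A5,
      all (fun p => all (fun q => pcomp p q \in A5) A5) A5,
      all (fun p => [&& pvalid p, pinv p \in A5, pcomp (pinv p) p == pid,
                        pcomp p (pinv p) == pid & ppow p 30 == pid]) A5
    & all (fun g => has (fun x => has (fun y => g == pcomm x y) A5) A5) A5].
Proof. by vm_compute. Qed.

Section A5Theory.
Variable g : perm5.
Hypothesis A5g : g \in A5.

Lemma A5_props : [&& pvalid g, pinv g \in A5, pcomp (pinv g) g == pid,
  pcomp g (pinv g) == pid & ppow g 30 == pid].
Proof. by case: A5_table => _ _ /allP hA _; apply: hA. Qed.

Lemma A5_valid : pvalid g. Proof. by case/and5P: A5_props. Qed.
Lemma A5_pinv : pinv g \in A5. Proof. by case/and5P: A5_props. Qed.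
Lemma pinvK : pcomp (pinv g) g = pid. Proof. by case/and5P: A5_props => _ _ /eqP. Qed.
Lemma pinvKV : pcomp g (pinv g) = pid. Proof. by case/and5P: A5_props => _ _ _ /eqP. Qed.
Lemma A5_exponent : ppow g 30 = pid. Proof. by case/and5P: A5_props => _ _ _ _ /eqP. Qed.

Lemma A5_is_commutator : exists2 x, x \in A5 & exists2 y, y \in A5 & g = pcomm x y.
Proof.
case: A5_table => _ _ _ /allP/(_ g A5g)/hasP[x Ax /hasP[y Ay /eqP ->]].
by exists x => //; exists y.
Qed.

End A5Theory.

Lemma A5_id : pid \in A5. Proof. by case: A5_table. Qed.

Lemma A5_mul g h : g \in A5 -> h \in A5 -> pcomp g h \in A5.
Proof. by case: A5_table => _ /allP hA _ _ /hA /allP; apply. Qed.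

Section Triples.
Variables (S : finType) (one zero : S).
Hypothesis one_neq_zero : one != zero.

Definition trip := (S * S * S)%type.
Definition bit (j k : nat) : S := if odd (j %/ 2 ^ k) then one else zero.
Definition enc (j : nat) : trip := (bit j 2, bit j 1, bit j 0).
Definition dec (x : trip) : option nat := ohead [seq j <- iota 0 5 | enc j == x].

(* The points 0..4 are encoded in binary on three cells; other triples are fixed. *)
Definition act (p : perm5) (x : trip) : trip :=
  if dec x is Some j then enc (nth 0 p j) else x.

Lemma eq_bit j j' k : (bit j k == bit j' k) = (odd (j %/ 2 ^ k) == odd (j' %/ 2 ^ k)).
Proof.
rewrite /bit; case: (odd _); case: (odd _); rewrite ?eqxx //.
  by rewrite (negbTE one_neq_zero).
by rewrite eq_sym (negbTE one_neq_zero).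
Qed.

Lemma eq_enc j j' : (enc j == enc j') =
  [&& odd (j %/ 2 ^ 2) == odd (j' %/ 2 ^ 2), odd (j %/ 2 ^ 1) == odd (j' %/ 2 ^ 1)
    & odd (j %/ 2 ^ 0) == odd (j' %/ 2 ^ 0)].
Proof. by rewrite /enc !xpair_eqE !eq_bit andbA. Qed.

Lemma encK j : j < 5 -> dec (enc j) = Some j.
Proof. by rewrite /dec; case: j => [|[|[|[|[|j]]]]] //= _; rewrite !eq_enc. Qed.

Lemma decK x j : dec x = Some j -> j < 5 /\ enc j = x.
Proof.
rewrite /dec => h.
have : j \in [seq j <- iota 0 5 | enc j == x].
  by move: h; case: [seq _ <- _ | _] => //= a s [->]; rewrite inE eqxx.
by rewrite mem_filter mem_iota => /andP[/eqP ->].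
Qed.

Lemma nth_pcomp p q j : j < 5 -> nth 0 (pcomp p q) j = nth 0 p (nth 0 q j).
Proof. by move=> hj; rewrite /pcomp (nth_map 0) ?size_iota // nth_iota. Qed.

Lemma pvalid_nth q j : pvalid q -> nth 0 q j < 5.
Proof.
move=> hq; case: (ltnP j (size q)) => hj; last by rewrite nth_default.
by move/allP: hq; apply; apply: mem_nth.
Qed.

Lemma act_comp p q x : pvalid q -> act (pcomp p q) x = act p (act q x).
Proof.
move=> hq; rewrite /act; case e: (dec x) => [j|]; last by rewrite e.
have [hj _] := decK e.
by rewrite encK ?pvalid_nth // nth_pcomp.
Qed.

Lemma act_id x : act pid x = x.
Proof.
rewrite /act; case e: (dec x) => [j|] //.
have [hj <-] := decK e.
by case: j hj {e} => [|[|[|[|[|j]]]]].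
Qed.

Lemma act_pinvK g x : g \in A5 -> act (pinv g) (act g x) = x.
Proof. by move=> Ag; rewrite -act_comp ?A5_valid // pinvK // act_id. Qed.

Lemma enc1_neq_enc0 : enc 1 != enc 0.
Proof. by rewrite eq_enc. Qed.

End Triples.


Section Construction.
Variables (S : finType) (one zero : S).
Hypothesis one_neq_zero : one != zero.
Local Open Scope Z_scope.
Notation C := (config S).

(* A frame is the pattern 1110s0s0s0s0s0 of length 14, [s] marking the five slots
   at offsets 4, 6, 8, 10, 12.  Two distinct frames never overlap. *)
Definition frame_word (w : Z -> S) : bool :=
  [&& w 0 == one, w 1 == one, w 2 == one, w 3 == zero &
      [&& w 5 == zero, w 7 == zero, w 9 == zero, w 11 == zero & w 13 == zero]].
Definition frame (c : C) (b : Z) : bool := frame_word (fun k => c (b + k)).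
Arguments frame : simpl never.

Lemma frame_word_ext w w' : (forall k, 0 <= k <= 13 -> w k = w' k) ->
  frame_word w = frame_word w'.
Proof. by move=> h; rewrite /frame_word !h //; lia. Qed.

Lemma frameP c b : frame c b ->
  [/\ c (b + 0) = one, c (b + 1) = one, c (b + 2) = one, c (b + 3) = zero &
  [/\ c (b + 5) = zero, c (b + 7) = zero, c (b + 9) = zero, c (b + 11) = zero
    & c (b + 13) = zero]].
Proof. by case/and5P=> /eqP-> /eqP-> /eqP-> /eqP-> /and5P[/eqP-> /eqP-> /eqP-> /eqP-> /eqP->]. Qed.

Ltac clash := match goal with
  | H1 : ?f ?u = one, H2 : ?f ?v = zero |- _ =>
    let E := fresh in assert (E : u = v) by lia; rewrite E H2 in H1;
    by move: one_neq_zero; rewrite -H1 eqxx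
  end.

Lemma frames_apart c x y : frame c x -> frame c y -> x < y -> x + 14 <= y.
Proof.
move=> /frameP[a0 a1 a2 a3 [a5 a7 a9 a11 a13]] /frameP[b0 b1 b2 b3 [b5 b7 b9 b11 b13]] lt.
case: (Z_lt_le_dec y (x + 14)) => // h; exfalso.
have : y = x+1 \/ y = x+2 \/ y = x+3 \/ y = x+4 \/ y = x+5 \/ y = x+6 \/ y = x+7 \/
  y = x+8 \/ y = x+9 \/ y = x+10 \/ y = x+11 \/ y = x+12 \/ y = x+13 by lia.
by case=> [e|[e|[e|[e|[e|[e|[e|[e|[e|[e|[e|[e|e]]]]]]]]]]]]; subst y; clash.
Qed.

Lemma frames_eq_or_apart c x y : frame c x -> frame c y ->
  x = y \/ x + 14 <= y \/ y + 14 <= x.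
Proof.
move=> hx hy; case: (Z.lt_trichotomy x y) => [h|[h|h]]; last (right; right); by [
  right; left; apply: frames_apart hx hy h | left | apply: frames_apart hy hx h].
Qed.

Definition slot (k : Z) := k = 4 \/ k = 6 \/ k = 8 \/ k = 10 \/ k = 12.

Definition slots_only (f : C -> C) :=
  forall c i, f c i <> c i -> exists2 b, frame c b & slot (i - b).

Lemma frame_ext c d b :
  (forall k, 0 <= k <= 13 -> ~ slot k -> c (b + k) = d (b + k)) -> frame c b = frame d b.
Proof.
move=> h; rewrite /frame /frame_word.
by rewrite (h 0) ?(h 1) ?(h 2) ?(h 3) ?(h 5) ?(h 7) ?(h 9) ?(h 11) ?(h 13) //; rewrite /slot; lia.
Qed.

Lemma frame_nonslot_fixed f c b k : slots_only f -> frame c b -> 0 <= k <= 13 -> ~ slot k ->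
  f c (b + k) = c (b + k).
Proof.
move=> hf hb hk hs; case: (f c (b + k) =P c (b + k)) => // /hf [b' hb' hs'].
by case: (frames_eq_or_apart hb hb'); rewrite /slot in hs hs'; lia.
Qed.

Lemma frame_slots_only f c b : slots_only f -> frame (f c) b = frame c b.
Proof.
move=> hf; case hb: (frame c b).
  by rewrite (@frame_ext _ c) // => k hk hs; exact: frame_nonslot_fixed.
apply/negbTE/negP => hfb; move/negbT/negP: hb; apply.
rewrite -(@frame_ext (f c)) // => k hk hs.
case: (f c (b + k) =P c (b + k)) => // /hf [b' hb' hs'].
have hfb' : frame (f c) b' by rewrite (@frame_ext _ c) // => j hj hsj; exact: frame_nonslot_fixed.
by case: (frames_eq_or_apart hfb hfb'); rewrite /slot in hs hs'; lia.
Qed.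

Definition local_map (F : (Z -> S) -> S) (c : C) : C := fun i => F (fun j => c (i + j)).

Lemma frame_shift (c : C) i a : frame_word (fun k => c (i + (a + k))) = frame c (i + a).
Proof. by apply: frame_word_ext => k _; rewrite Z.add_assoc. Qed.

(* Cells 4 and 6 of all frames form a two-lane conveyor belt: [swap_lanes] exchanges
   the two cells of each frame, [pass_lanes] exchanges cell 6 of a frame with cell 4 of
   the adjacent frame to its right.  Cells 8, 10, 12 hold a point of {0..4}. *)
Definition swap_lanes_rule (w : Z -> S) : S :=
  if frame_word (fun k => w (-4 + k)) then w 2
  else if frame_word (fun k => w (-6 + k)) then w (-2) else w 0.
Definition pass_lanes_rule (w : Z -> S) : S :=
  if frame_word (fun k => w (-6 + k)) && frame_word (fun k => w (8 + k)) then w 12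
  else if frame_word (fun k => w (-4 + k)) && frame_word (fun k => w (-18 + k)) then w (-12)
  else w 0.
Definition swap_lanes := local_map swap_lanes_rule.
Definition pass_lanes := local_map pass_lanes_rule.

Definition frame_trip (c : C) (b : Z) : trip S := (c (b + 8), c (b + 10), c (b + 12)).

Definition act_frames (phi : Z -> perm5) (c : C) : C := fun i =>
  if frame c (i + -8) then (act one zero (phi (i + -8)) (frame_trip c (i + -8))).1.1
  else if frame c (i + -10) then (act one zero (phi (i + -10)) (frame_trip c (i + -10))).1.2
  else if frame c (i + -12) then (act one zero (phi (i + -12)) (frame_trip c (i + -12))).2
  else c i.
Arguments act_frames : simpl never.
Arguments swap_lanes : simpl never.
Arguments pass_lanes : simpl never.
Arguments frame_trip : simpl never.

Lemma swap_lanesE c i : swap_lanes c i =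
  if frame c (i + -4) then c (i + 2) else if frame c (i + -6) then c (i + -2) else c i.
Proof. by rewrite /swap_lanes /local_map /swap_lanes_rule !frame_shift Z.add_0_r. Qed.

Lemma pass_lanesE c i : pass_lanes c i =
  if frame c (i + -6) && frame c (i + 8) then c (i + 12)
  else if frame c (i + -4) && frame c (i + -18) then c (i + -12) else c i.
Proof. by rewrite /pass_lanes /local_map /pass_lanes_rule !frame_shift Z.add_0_r. Qed.

Lemma act_framesE phi c i : act_frames phi c i =
  if frame c (i + -8) then (act one zero (phi (i + -8)) (frame_trip c (i + -8))).1.1
  else if frame c (i + -10) then (act one zero (phi (i + -10)) (frame_trip c (i + -10))).1.2
  else if frame c (i + -12) then (act one zero (phi (i + -12)) (frame_trip c (i + -12))).2
  else c i.
Proof. by []. Qed.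

Lemma slots_only_swap_lanes : slots_only swap_lanes.
Proof.
move=> c i; rewrite swap_lanesE; case: ifP => h1.
  by exists (i + -4) => //; rewrite /slot; lia.
by case: ifP => h2 // _; exists (i + -6) => //; rewrite /slot; lia.
Qed.

Lemma slots_only_pass_lanes : slots_only pass_lanes.
Proof.
move=> c i; rewrite pass_lanesE; case: ifP => /andP h1.
  by exists (i + -6); [case: h1 | rewrite /slot; lia].
by case: ifP => /andP h2 // _; exists (i + -4); [case: h2 | rewrite /slot; lia].
Qed.

Lemma slots_only_act_frames phi : slots_only (act_frames phi).
Proof.
move=> c i; rewrite act_framesE; case: ifP => h1.
  by exists (i + -8) => //; rewrite /slot; lia.
case: ifP => h2; first by exists (i + -10) => //; rewrite /slot; lia.
by case: ifP => h3 // _; exists (i + -12) => //; rewrite /slot; lia.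
Qed.

Lemma frame_swap_lanes c b : frame (swap_lanes c) b = frame c b.
Proof. by apply: frame_slots_only; exact: slots_only_swap_lanes. Qed.
Lemma frame_pass_lanes c b : frame (pass_lanes c) b = frame c b.
Proof. by apply: frame_slots_only; exact: slots_only_pass_lanes. Qed.
Lemma frame_act_frames phi c b : frame (act_frames phi c) b = frame c b.
Proof. by apply: frame_slots_only; exact: slots_only_act_frames. Qed.

Ltac frame_cases :=
  repeat (rewrite ?swap_lanesE ?pass_lanesE ?act_framesE ?frame_swap_lanes
            ?frame_pass_lanes ?frame_act_frames; rewrite -?Z.add_assoc /= ?Z.add_0_r);
  repeat match goal with |- context [frame ?c ?x] =>
    let h := fresh "hb" in case h: (frame c x) => /= end;
  try (match goal with H1 : context [frame ?c ?x], H2 : context [frame ?c ?y] |- _ =>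
    let hs := fresh in
    have hs := frames_eq_or_apart H1 H2; exfalso; clear - hs; lia end);
  try reflexivity; try congruence.

Lemma swap_lanesK : involutive swap_lanes.
Proof. move=> c; apply: functional_extensionality => i; frame_cases. Qed.
Lemma pass_lanesK : involutive pass_lanes.
Proof. move=> c; apply: functional_extensionality => i; frame_cases. Qed.

Lemma frame_trip_swap_lanes c b : frame c b -> frame_trip (swap_lanes c) b = frame_trip c b.
Proof. by move=> h; rewrite /frame_trip; frame_cases. Qed.
Lemma frame_trip_pass_lanes c b : frame c b -> frame_trip (pass_lanes c) b = frame_trip c b.
Proof. by move=> h; rewrite /frame_trip; frame_cases. Qed.

Lemma trip_eta (x : trip S) : (x.1.1, x.1.2, x.2) = x.
Proof. by case: x => [[]]. Qed.

Lemma frame_trip_act_frames phi c b : frame c b ->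
  frame_trip (act_frames phi c) b = act one zero (phi b) (frame_trip c b).
Proof. by move=> h; rewrite /frame_trip; frame_cases; rewrite trip_eta /frame_trip. Qed.

Lemma swap_lanes_act_frames phi c : swap_lanes (act_frames phi c) = act_frames phi (swap_lanes c).
Proof. by apply: functional_extensionality => i; frame_cases; rewrite ?frame_trip_swap_lanes. Qed.
Lemma pass_lanes_act_frames phi c : pass_lanes (act_frames phi c) = act_frames phi (pass_lanes c).
Proof. by apply: functional_extensionality => i; frame_cases; rewrite ?frame_trip_pass_lanes. Qed.

Lemma act_frames_comp phi1 phi2 c : (forall b, pvalid (phi2 b)) ->
  act_frames phi1 (act_frames phi2 c) = act_frames (fun b => pcomp (phi1 b) (phi2 b)) c.
Proof.
move=> hv; apply: functional_extensionality => i.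
rewrite !act_framesE !frame_act_frames.
case h1: (frame c (i + -8)); first by rewrite frame_trip_act_frames // act_comp.
case h2: (frame c (i + -10)); first by rewrite frame_trip_act_frames // act_comp.
by case h3: (frame c (i + -12)); first by rewrite frame_trip_act_frames // act_comp.
Qed.

Lemma act_frames_id c : act_frames (fun _ => pid) c = c.
Proof.
apply: functional_extensionality => i; rewrite act_framesE !act_id.
by do 3 (case: ifP => _; first by rewrite /frame_trip -?Z.add_assoc /= ?Z.add_0_r).
Qed.

Lemma act_frames_lane phi c b : frame c b -> act_frames phi c (b + 4) = c (b + 4).
Proof. by move=> h; frame_cases. Qed.

Lemma shift_local_map F c : local_map F (shift c) = shift (local_map F c).
Proof.
apply: functional_extensionality => i; rewrite /local_map /shift; congr F.
by apply: functional_extensionality => j; congr c; lia.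
Qed.

Definition local_rule (F : (Z -> S) -> S) := forall w w' : Z -> S,
  (forall j, -30 <= j <= 30 -> w j = w' j) -> F w = F w'.

Lemma continuous_local_map F : local_rule F -> continuous (local_map F).
Proof.
move=> hF x n; exists (n + 30)%nat => y hxy i hi; apply: hF => j hj.
by apply: hxy; lia.
Qed.

Lemma continuous_comp (f g : C -> C) : continuous f -> continuous g -> continuous (f \o g).
Proof.
move=> hf hg x n; have [m hm] := hf (g x) n; have [k hk] := hg x m.
by exists k => y hy; apply/hm/hk.
Qed.

Lemma frame_word_local (w w' : Z -> S) a : (forall j, -30 <= j <= 30 -> w j = w' j) ->
  -20 <= a <= 16 -> frame_word (fun k => w (a + k)) = frame_word (fun k => w' (a + k)).
Proof. by move=> h ha; apply: frame_word_ext => k hk; apply: h; lia. Qed.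

Lemma local_swap_lanes_rule : local_rule swap_lanes_rule.
Proof.
move=> w w' h; rewrite /swap_lanes_rule.
by rewrite (frame_word_local (a := -4) h) ?(frame_word_local (a := -6) h) ?h //; lia.
Qed.

Lemma local_pass_lanes_rule : local_rule pass_lanes_rule.
Proof.
move=> w w' h; rewrite /pass_lanes_rule.
rewrite (frame_word_local (a := -4) h) ?(frame_word_local (a := -6) h)
  ?(frame_word_local (a := 8) h) ?(frame_word_local (a := -18) h) ?h //; lia.
Qed.

(* [controlled g] applies [g] to the point held by a frame whose cell 4 (the upper
   lane) carries [one]. *)
Definition control (g : perm5) (w : Z -> S) (b : Z) : perm5 :=
  if frame_word (fun k => w (b + k)) && (w (b + 4) == one) then g else pid.
Definition trip_at (w : Z -> S) (b : Z) : trip S := (w (b + 8), w (b + 10), w (b + 12)).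
Definition controlled_rule (g : perm5) (w : Z -> S) : S :=
  if frame_word (fun k => w (-8 + k)) then (act one zero (control g w (-8)) (trip_at w (-8))).1.1
  else if frame_word (fun k => w (-10 + k)) then
    (act one zero (control g w (-10)) (trip_at w (-10))).1.2
  else if frame_word (fun k => w (-12 + k)) then
    (act one zero (control g w (-12)) (trip_at w (-12))).2
  else w 0.
Definition controlled g := local_map (controlled_rule g).

Definition switch (g : perm5) (c : C) (b : Z) : perm5 :=
  if frame c b && (c (b + 4) == one) then g else pid.

Lemma local_controlled_rule g : local_rule (controlled_rule g).
Proof.
move=> w w' h; rewrite /controlled_rule /control /trip_at.
rewrite (frame_word_local (a := -8) h) ?(frame_word_local (a := -10) h)
  ?(frame_word_local (a := -12) h) ?(h (-8 + 4)) ?(h (-10 + 4)) ?(h (-12 + 4))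
  ?(h (-8 + 8)) ?(h (-8 + 10)) ?(h (-8 + 12)) ?(h (-10 + 8)) ?(h (-10 + 10))
  ?(h (-10 + 12)) ?(h (-12 + 8)) ?(h (-12 + 10)) ?(h (-12 + 12)) ?h //; lia.
Qed.

Lemma controlledE g c : controlled g c = act_frames (switch g c) c.
Proof.
apply: functional_extensionality => i.
rewrite /controlled /local_map /controlled_rule /control /trip_at act_framesE /switch.
by rewrite /frame_trip !frame_shift -!Z.add_assoc /= ?Z.add_0_r.
Qed.

Lemma switch_act_frames g phi c : switch g (act_frames phi c) = switch g c.
Proof.
apply: functional_extensionality => b; rewrite /switch frame_act_frames.
by case h: (frame c b) => //=; rewrite act_frames_lane.
Qed.

Lemma A5_switch g c b : g \in A5 -> switch g c b \in A5.
Proof. by rewrite /switch; case: ifP => // _ _; apply: A5_id. Qed.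

Lemma controlled_comp h g c : g \in A5 ->
  controlled h (controlled g c) = act_frames (fun b => pcomp (switch h c b) (switch g c b)) c.
Proof.
move=> Ag; rewrite !controlledE switch_act_frames act_frames_comp // => b.
exact/A5_valid/A5_switch.
Qed.

Lemma controlledK g : g \in A5 -> cancel (controlled g) (controlled (pinv g)).
Proof.
move=> Ag c; rewrite controlled_comp // -[RHS]act_frames_id; congr act_frames.
by apply: functional_extensionality => b; rewrite /switch; case: ifP => // _; rewrite pinvK.
Qed.

Lemma controlledKV g : g \in A5 -> cancel (controlled (pinv g)) (controlled g).
Proof.
move=> Ag c; rewrite controlled_comp ?A5_pinv // -[RHS]act_frames_id; congr act_frames.
by apply: functional_extensionality => b; rewrite /switch; case: ifP => // _; rewrite pinvKV.
Qed.

Definition belt : C -> C := pass_lanes \o swap_lanes.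
Definition belt_inv : C -> C := swap_lanes \o pass_lanes.

Lemma beltK : cancel belt belt_inv.
Proof. by move=> c; rewrite /belt /belt_inv /= pass_lanesK swap_lanesK. Qed.
Lemma belt_invK : cancel belt_inv belt.
Proof. by move=> c; rewrite /belt /belt_inv /= swap_lanesK pass_lanesK. Qed.

Lemma is_aut_belt : is_aut belt.
Proof.
split; last by move=> x; rewrite /belt /= /swap_lanes /pass_lanes !shift_local_map.
exists belt_inv; split; [exact: beltK | split; first exact: belt_invK].
by split; apply: continuous_comp; apply: continuous_local_map;
  first [exact: local_swap_lanes_rule | exact: local_pass_lanes_rule].
Qed.

Lemma is_aut_controlled g : g \in A5 -> is_aut (controlled g).
Proof.
move=> Ag; split; last by move=> x; exact: shift_local_map.
exists (controlled (pinv g)); split; first exact: controlledK.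
split; first exact: controlledKV.
by split; apply/continuous_local_map/local_controlled_rule.
Qed.

Definition belt_pow (n : Z) : C -> C :=
  if 0 <=? n then iter (Z.to_nat n) belt else iter (Z.to_nat (- n)) belt_inv.

Lemma belt_pow_succ n c : belt_pow (n + 1) c = belt (belt_pow n c).
Proof.
rewrite /belt_pow; case: (Z.leb_spec 0 n) => h.
  have -> : 0 <=? n + 1 = true by apply/Z.leb_le; lia.
  by rewrite (_ : Z.to_nat (n + 1) = (Z.to_nat n).+1); last lia.
case: (Z.leb_spec 0 (n + 1)) => h'.
  have -> : n = -1 by lia.
  by rewrite /= belt_invK.
have -> : Z.to_nat (- n) = (Z.to_nat (- (n + 1))).+1 by lia.
by rewrite iterS belt_invK.
Qed.

Lemma belt_pow_pred n c : belt_pow (n - 1) c = belt_inv (belt_pow n c).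
Proof. by rewrite -[in RHS](Z.sub_add 1 n) belt_pow_succ beltK. Qed.

Lemma belt_pow_add m n c : belt_pow (m + n) c = belt_pow m (belt_pow n c).
Proof.
elim/Z.peano_ind: m c => [|m IH|m IH] c; first by [].
  by rewrite -Z.add_assoc (Z.add_comm 1) Z.add_assoc !belt_pow_succ IH.
by rewrite (_ : m - 1 + n = (m + n) - 1); [rewrite !belt_pow_pred IH | lia].
Qed.

Lemma belt_powK n : cancel (belt_pow n) (belt_pow (- n)).
Proof. by move=> c; rewrite -belt_pow_add Z.add_opp_diag_l. Qed.
Lemma belt_powKV n : cancel (belt_pow (- n)) (belt_pow n).
Proof. by move=> c; rewrite -belt_pow_add Z.add_opp_diag_r. Qed.

Lemma belt_act_frames phi c : belt (act_frames phi c) = act_frames phi (belt c).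
Proof. by rewrite /belt /= swap_lanes_act_frames pass_lanes_act_frames. Qed.
Lemma belt_inv_act_frames phi c : belt_inv (act_frames phi c) = act_frames phi (belt_inv c).
Proof. by rewrite /belt_inv /= pass_lanes_act_frames swap_lanes_act_frames. Qed.

Lemma belt_pow_act_frames n phi c : belt_pow n (act_frames phi c) = act_frames phi (belt_pow n c).
Proof.
rewrite /belt_pow; case: ifP => _; elim: (Z.to_nat _) => //= k ->;
  by rewrite ?belt_act_frames ?belt_inv_act_frames.
Qed.

Lemma frame_belt c b : frame (belt c) b = frame c b.
Proof. by rewrite /belt /= frame_pass_lanes frame_swap_lanes. Qed.
Lemma frame_belt_inv c b : frame (belt_inv c) b = frame c b.
Proof. by rewrite /belt_inv /= frame_swap_lanes frame_pass_lanes. Qed.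

Lemma frame_belt_pow n c b : frame (belt_pow n c) b = frame c b.
Proof.
rewrite /belt_pow; case: ifP => _; elim: (Z.to_nat _) => //= k <-;
  by rewrite ?frame_belt ?frame_belt_inv.
Qed.

(* Every element of the group generated by [belt] and the [controlled g] has the form
   [frame_map psi \o belt_pow n], where [psi c b] is the element of A5 applied to the
   frame at [b]; it depends on [c] only through cells the [act_frames] leave fixed. *)
Definition frame_invariant (psi : C -> Z -> perm5) :=
  forall phi c, (forall b, pvalid (phi b)) -> psi (act_frames phi c) = psi c.
Definition A5_valued (psi : C -> Z -> perm5) := forall c b, psi c b \in A5.
Definition frame_map (psi : C -> Z -> perm5) (c : C) : C := act_frames (psi c) c.

Definition has_degree (h : C -> C) (n : Z) :=
  exists psi, [/\ frame_invariant psi, A5_valued psi &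
                 forall c, h c = frame_map psi (belt_pow n c)].

Lemma frame_map_comp psi1 psi2 c : frame_invariant psi1 -> A5_valued psi2 ->
  frame_map psi1 (frame_map psi2 c) = frame_map (fun c b => pcomp (psi1 c b) (psi2 c b)) c.
Proof.
move=> h1 h2; have hv b : pvalid (psi2 c b) by exact/A5_valid/h2.
by rewrite /frame_map h1 // act_frames_comp.
Qed.

Lemma frame_map_id c : frame_map (fun _ _ => pid) c = c.
Proof. exact: act_frames_id. Qed.

Lemma belt_pow_frame_map m psi c :
  belt_pow m (frame_map psi c) = frame_map (fun c => psi (belt_pow (- m) c)) (belt_pow m c).
Proof. by rewrite /frame_map belt_pow_act_frames belt_powK. Qed.

Lemma frame_invariant_belt_pow m psi : frame_invariant psi ->
  frame_invariant (fun c => psi (belt_pow m c)).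
Proof. by move=> h phi c hv; rewrite belt_pow_act_frames h. Qed.

Lemma has_degree_comp h1 h2 n1 n2 :
  has_degree h1 n1 -> has_degree h2 n2 -> has_degree (h1 \o h2) (n1 + n2).
Proof.
move=> [p1 [i1 v1 e1]] [p2 [i2 v2 e2]].
exists (fun c b => pcomp (p1 c b) (p2 (belt_pow (- n1) c) b)); split.
- move=> phi c hv /=; rewrite i1 //.
  by congr (fun f b => pcomp (p1 c b) (f b)); rewrite belt_pow_act_frames i2.
- by move=> c b; apply: A5_mul.
- by move=> c /=; rewrite e2 e1 belt_pow_frame_map frame_map_comp ?belt_pow_add.
Qed.

Lemma has_degree_inv h h' n : has_degree h n -> cancel h h' -> cancel h' h -> has_degree h' (- n).
Proof.
move=> [p [ip vp e]] hK hK'.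
set pi := fun c b => pinv (p c b).
have ipi : frame_invariant pi by move=> phi c hv; rewrite /pi ip.
have vpi : A5_valued pi by move=> c b; exact/A5_pinv.
exists (fun c => pi (belt_pow n c)); split; first exact: frame_invariant_belt_pow.
  by move=> c b; apply: vpi.
move=> c.
have E : h (belt_pow (- n) (frame_map pi c)) = c.
  rewrite e belt_powKV frame_map_comp // -[RHS]frame_map_id; congr frame_map.
  by do 2 apply: functional_extensionality => ?; rewrite pinvKV.
by rewrite -{1}E hK belt_pow_frame_map Z.opp_involutive.
Qed.

Lemma iter_frame_map psi k c : frame_invariant psi -> A5_valued psi ->
  iter k (frame_map psi) c = frame_map (fun c b => ppow (psi c b) k) c.
Proof.
move=> ip vp; elim: k => [|k IH] /=; first by rewrite frame_map_id.
rewrite IH frame_map_comp // => d b.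
by elim: k {IH} => [|k IH] /=; [exact: A5_id | exact: A5_mul].
Qed.

Lemma has_degree0_exponent h : has_degree h 0 -> forall c, iter 30 h c = c.
Proof.
move=> [p [ip vp e]] c.
have -> : h = frame_map p by apply: functional_extensionality => d; rewrite e.
rewrite iter_frame_map // -[RHS]frame_map_id; congr frame_map.
by do 2 apply: functional_extensionality => ?; rewrite A5_exponent.
Qed.

Lemma has_degree_id : has_degree id 0.
Proof. by exists (fun _ _ => pid); split => // c; rewrite frame_map_id. Qed.

Lemma has_degree_belt : has_degree belt 1.
Proof. by exists (fun _ _ => pid); split => // c; rewrite frame_map_id. Qed.

Lemma has_degree_controlled g : g \in A5 -> has_degree (controlled g) 0.
Proof.
move=> Ag; exists (switch g); split => [phi c _||c]; first exact: switch_act_frames.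
  by move=> c b; apply: A5_switch.
exact: controlledE.
Qed.

Definition generators : list (C -> C) := belt :: List.map controlled A5.

Lemma In_A5 g : In g A5 <-> g \in A5.
Proof.
elim: A5 => //= x s IH; rewrite inE; split.
  by case=> [->|/IH ->]; rewrite ?eqxx ?orbT.
by case/orP=> [/eqP ->|/IH]; [left | right].
Qed.

Lemma In_generators f : In f generators -> f = belt \/ exists2 g, g \in A5 & f = controlled g.
Proof.
move=> hf; have [<-|] : belt = f \/ In f (List.map controlled A5) := hf; first by left.
by case/in_map_iff=> g [<- /In_A5 Ag]; right; exists g.
Qed.

Lemma gen_has_degree h : gen_list generators h -> exists n, has_degree h n.
Proof.
have deg_gen f : In f generators -> exists n, has_degree f n.
  case/In_generators=> [->|[g Ag ->]]; first by exists 1; exact: has_degree_belt.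
  by exists 0; exact: has_degree_controlled.
elim=> [|a b /deg_gen [m hm] _ [n hn]|a a' b /deg_gen [m hm] aK aK' _ [n hn]].
- by exists 0; exact: has_degree_id.
- by exists (m + n); exact: has_degree_comp.
- by exists (- m + n); apply: has_degree_comp hn; exact: has_degree_inv aK aK'.
Qed.

Fixpoint commutator_word (k : nat) : list letter :=
  if k is k'.+1 then (false, true) :: (true, true) :: (false, false) :: (true, false)
                       :: commutator_word k'
  else nil.

Lemma reduced_commutator_word k : reduced (commutator_word k).
Proof.
have tail j : reduced ((true, false) :: commutator_word j).
  by elim: j => [|j IH] //=; do 4 (split; first by case).
by case: k => [|k] //=; do 3 (split; first by case); exact: tail.
Qed.

Lemma eval_commutator_word (a a' b b' : C -> C) k c :
  eval_word a a' b b' (commutator_word k) c = iter k (a' \o b' \o a \o b) c.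
Proof. by elim: k => //= k ->. Qed.

(* Commutators have degree 0, hence order dividing 30. *)
Lemma no_free_subgroup : ~ contains_free2 (gen_list generators).
Proof.
move=> [a [a' [b [b' [Ha [Hb [aK [aK' [bK [bK' free]]]]]]]]]].
have [[n1 h1] [n2 h2]] := (gen_has_degree Ha, gen_has_degree Hb).
have := has_degree_comp (has_degree_inv h1 aK aK')
  (has_degree_comp (has_degree_inv h2 bK bK') (has_degree_comp h1 h2)).
rewrite (_ : - n1 + (- n2 + (n1 + n2)) = 0); last lia.
move/has_degree0_exponent => E.
apply: (free (commutator_word 30)) => //; first exact: reduced_commutator_word.
by apply: functional_extensionality => c; rewrite eval_commutator_word E.
Qed.

(* The configuration with a frame at every multiple of 14, holding [U k] and [D k] in
   the lanes of frame [k] and the point [x0] in every frame. *)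
Definition chain_cell (U D : Z -> S) (x0 : trip S) (k j : Z) : S :=
  if j =? 0 then one else if j =? 1 then one else if j =? 2 then one else
  if j =? 4 then U k else if j =? 6 then D k else if j =? 8 then x0.1.1 else
  if j =? 10 then x0.1.2 else if j =? 12 then x0.2 else zero.
Definition chain U D x0 : C := fun i => chain_cell U D x0 (i / 14) (i mod 14).

Lemma chainE U D x0 k m : chain U D x0 (14 * k + m) = chain_cell U D x0 (k + m / 14) (m mod 14).
Proof.
rewrite /chain; congr chain_cell; first by rewrite Z.mul_comm Z.div_add_l.
by rewrite Z.add_comm Z.mul_comm Z.mod_add.
Qed.

Ltac eval_div14 := repeat match goal with
 | |- context [(?a / 14)%Z] => let v := eval vm_compute in (a / 14)%Z in
     match v with Z0 => idtac | Zpos _ => idtac | Zneg _ => idtac end; change (a / 14)%Z with v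
 | |- context [(?a mod 14)%Z] => let v := eval vm_compute in (a mod 14)%Z in
     match v with Z0 => idtac | Zpos _ => idtac | Zneg _ => idtac end; change (a mod 14)%Z with v
 end.

Lemma frame_chain0 U D x0 q : frame (chain U D x0) (14 * q).
Proof. by rewrite /frame /frame_word !chainE; eval_div14; rewrite /chain_cell /= !eqxx. Qed.

Lemma frame_chain U D x0 q m : frame (chain U D x0) (14 * q + m) = (m mod 14 =? 0).
Proof.
have hm := Z.div_mod m 14; have hr := Z.mod_pos_bound m 14.
set r := m mod 14 in hm hr *; set d := m / 14 in hm.
have -> : 14 * q + m = 14 * (q + d) + r by lia.
case: (Z.eqb_spec r 0) => h; first by rewrite h Z.add_0_r frame_chain0.
apply/negbTE/negP => hb.
by have := frames_eq_or_apart hb (frame_chain0 U D x0 (q + d)); lia.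
Qed.

Lemma residue14 i : exists k j, i = 14 * k + j /\ 0 <= j < 14.
Proof. by exists (i / 14), (i mod 14); split; [exact: Z.div_mod | exact: Z.mod_pos_bound]. Qed.

Ltac split_residue := move=> i; have [k [j [-> hj]]] := residue14 i;
  (have : j = 0 \/ j = 1 \/ j = 2 \/ j = 3 \/ j = 4 \/ j = 5 \/ j = 6 \/ j = 7 \/ j = 8 \/
     j = 9 \/ j = 10 \/ j = 11 \/ j = 12 \/ j = 13 by lia);
  case => [->|[->|[->|[->|[->|[->|[->|[->|[->|[->|[->|[->|[->|->]]]]]]]]]]]]].

Lemma swap_lanes_chain U D x0 : swap_lanes (chain U D x0) = chain D U x0.
Proof.
apply: functional_extensionality; split_residue; rewrite swap_lanesE -!Z.add_assoc /= !frame_chain;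
  eval_div14; rewrite /= !chainE; eval_div14; rewrite /chain_cell /= ?Z.add_0_r //.
Qed.

Lemma pass_lanes_chain U D x0 :
  pass_lanes (chain U D x0) = chain (fun k => D (k + -1)) (fun k => U (k + 1)) x0.
Proof.
apply: functional_extensionality; split_residue; rewrite pass_lanesE -!Z.add_assoc /= !frame_chain;
  eval_div14; rewrite /= !chainE; eval_div14; rewrite /chain_cell /= ?Z.add_0_r //.
Qed.

Lemma chain_ext U D U' D' x0 : U =1 U' -> D =1 D' -> chain U D x0 = chain U' D' x0.
Proof. by move=> /functional_extensionality -> /functional_extensionality ->. Qed.

Lemma belt_pow_chain n U D x0 :
  belt_pow n (chain U D x0) = chain (fun k => U (k - n)) (fun k => D (k + n)) x0.
Proof.
elim/Z.peano_ind: n => [|n IH|n IH].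
- by apply: chain_ext => k; rewrite ?Z.sub_0_r ?Z.add_0_r.
- rewrite belt_pow_succ IH /belt /= swap_lanes_chain pass_lanes_chain.
  by apply: chain_ext => k; congr (_ _); lia.
- rewrite belt_pow_pred IH /belt_inv /= pass_lanes_chain swap_lanes_chain.
  by apply: chain_ext => k; congr (_ _); lia.
Qed.

Notation G := (gen_list generators).

Lemma gen_belt : G belt.
Proof. exact: gen_mul (or_introl erefl) (gen_id _). Qed.

Lemma gen_belt_inv : G belt_inv.
Proof. exact: gen_mulinv (or_introl erefl) beltK belt_invK (gen_id _). Qed.

Lemma gen_controlled g : g \in A5 -> G (controlled g).
Proof.
move=> Ag; have g_in : In (controlled g) generators by right; apply/in_map/In_A5.
exact: gen_mul g_in (gen_id _).
Qed.

Lemma gen_belt_pow n : G (belt_pow n).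
Proof.
by rewrite /belt_pow; case: ifP => _; apply: gen_iter; [exact: gen_belt | exact: gen_belt_inv].
Qed.

(* [controlled g] conjugated so that it is controlled by the lane cell [p] steps down
   the belt. *)
Definition controlled_at (p : Z) (g : perm5) : C -> C :=
  belt_pow p \o controlled g \o belt_pow (- p).

Lemma gen_controlled_at p g : g \in A5 -> G (controlled_at p g).
Proof.
by move=> Ag; exact: gen_comp (gen_comp (gen_belt_pow p) (gen_controlled Ag)) (gen_belt_pow _).
Qed.

Lemma controlled_atE p g c : controlled_at p g c = act_frames (switch g (belt_pow (- p) c)) c.
Proof. by rewrite /controlled_at /= controlledE belt_pow_act_frames belt_powKV. Qed.

Lemma controlled_atK p g : g \in A5 -> cancel (controlled_at p g) (controlled_at p (pinv g)).
Proof. by move=> Ag c; rewrite /controlled_at /= belt_powK controlledK // belt_powKV. Qed.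
Lemma controlled_atKV p g : g \in A5 -> cancel (controlled_at p (pinv g)) (controlled_at p g).
Proof. by move=> Ag c; rewrite /controlled_at /= belt_powK controlledKV // belt_powKV. Qed.

Lemma controlled_at_conj m p g c :
  belt_pow (- m) (controlled_at p g (belt_pow m c)) = controlled_at (p - m) g c.
Proof.
rewrite /controlled_at /= -!belt_pow_add.
by congr (belt_pow _ (controlled g (belt_pow _ c))); lia.
Qed.

(* [c] has a frame at 0, and the cell of the upper lane that the belt brings into frame 0
   after [q * J] backward steps carries [one] exactly when [q = 0]. *)
Definition marked (J : Z) (c : C) :=
  frame c 0 /\ forall q : nat, (belt_pow (- (Z.of_nat q * J)) c 4 == one) = (q == 0)%N.

Lemma marked_act_frames J phi c : marked J (act_frames phi c) <-> marked J c.
Proof.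
rewrite /marked frame_act_frames.
suff lane q : frame c 0 ->
    belt_pow (- (Z.of_nat q * J)) (act_frames phi c) 4 = belt_pow (- (Z.of_nat q * J)) c 4.
  by split=> -[hb hq]; split=> // q; rewrite -hq lane.
by move=> hb; rewrite belt_pow_act_frames -[4]/(0 + 4) act_frames_lane // frame_belt_pow.
Qed.

Definition acts_on_marked (J : Z) (k : C -> C) (h : trip S -> trip S) :=
  [/\ forall c, marked J c -> marked J (k c),
      forall c, marked J c -> exists2 d, marked J d & k d = c &
      forall c, marked J c -> frame_trip (k c) 0 = h (frame_trip c 0)].

Lemma acts_on_marked_comp J k1 k2 h1 h2 :
  acts_on_marked J k1 h1 -> acts_on_marked J k2 h2 -> acts_on_marked J (k1 \o k2) (h1 \o h2).
Proof.
move=> [m1 s1 e1] [m2 s2 e2]; split => c hc /=.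
- exact/m1/m2.
- by have [d hd <-] := s1 c hc; have [e he <-] := s2 d hd; exists e.
- by rewrite e1 ?e2 //; apply: m2.
Qed.

Lemma acts_on_marked_id J : acts_on_marked J id id.
Proof. by split=> // c hc; exists c. Qed.

Lemma acts_on_marked_ext J k k' h h' :
  acts_on_marked J k h -> k =1 k' -> h =1 h' -> acts_on_marked J k' h'.
Proof.
move=> [m s e] ek eh; split => x hx; first by rewrite -ek; apply: m.
  by have [d hd <-] := s x hx; exists d; rewrite ?ek.
by rewrite -ek -eh; apply: e.
Qed.

Lemma acts_on_marked_inv J k k' h h' : acts_on_marked J k h -> cancel k k' -> cancel k' k ->
  cancel h h' -> acts_on_marked J k' h'.
Proof.
move=> [m s e] kK kK' hK; split => x hx.
- by have [d hd <-] := s x hx; rewrite kK.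
- by exists (k x); [apply: m | rewrite kK].
- by have [d hd <-] := s x hx; rewrite kK e.
Qed.

Lemma acts_on_marked_controlled_at J g (q : nat) : g \in A5 ->
  acts_on_marked J (controlled_at (Z.of_nat q * J) g) (act one zero (if q == 0%N then g else pid)).
Proof.
move=> Ag; split => c hc.
- by rewrite controlled_atE; apply/marked_act_frames.
- exists (controlled_at (Z.of_nat q * J) (pinv g) c); last exact: controlled_atKV.
  by rewrite controlled_atE; apply/marked_act_frames.
- case: hc => hb hq.
  by rewrite controlled_atE frame_trip_act_frames // /switch frame_belt_pow hb /= hq.
Qed.

Fixpoint controlled_train (J : Z) (g : perm5) (b n : nat) : C -> C :=
  if n is n'.+1 then controlled_at (Z.of_nat b * J) g \o controlled_train J g b.+1 n' else id.

Lemma gen_controlled_train J g b n : g \in A5 -> G (controlled_train J g b n).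
Proof.
move=> Ag; elim: n b => [|n IH] b /=; first exact: gen_id.
exact: gen_comp (gen_controlled_at _ Ag) (IH _).
Qed.

Lemma controlled_train_inj J g b n : g \in A5 -> injective (controlled_train J g b n).
Proof.
move=> Ag; elim: n b => [|n IH] b /=; first by move=> x y.
exact/inj_comp/IH/can_inj/controlled_atK.
Qed.

Lemma controlled_train_cat J g b m n c :
  controlled_train J g b (m + n) c = controlled_train J g b m (controlled_train J g (b + m) n c).
Proof. by elim: m b => [|m IH] b /=; rewrite ?addn0 // IH addSnnS. Qed.

Lemma controlled_train_conj J g m n b c :
  belt_pow (- (Z.of_nat m * J)) (controlled_train J g (b + m) n (belt_pow (Z.of_nat m * J) c))
  = controlled_train J g b n c.
Proof.
elim: n b c => [|n IH] b c /=; first by rewrite belt_powK.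
rewrite -(belt_powKV (Z.of_nat m * J) (controlled_train _ _ _ _ _)) -addSn IH controlled_at_conj.
by congr (controlled_at _ g _); rewrite Nat2Z.inj_add; ring.
Qed.

Lemma acts_on_marked_train_tail J g b n : g \in A5 -> (0 < b)%N ->
  acts_on_marked J (controlled_train J g b n) id.
Proof.
move=> Ag; elim: n b => [|n IH] b hb /=; first exact: acts_on_marked_id.
apply: acts_on_marked_ext
  (acts_on_marked_comp (acts_on_marked_controlled_at J b Ag) (IH b.+1 (ltn0Sn b))) _ _ => // x.
by case: b hb => // b _; exact: act_id.
Qed.

Lemma acts_on_marked_train J g n : g \in A5 -> (0 < n)%N ->
  acts_on_marked J (controlled_train J g 0 n) (act one zero g).
Proof.
move=> Ag; case: n => // n _.
by apply: acts_on_marked_ext (acts_on_marked_comp (acts_on_marked_controlled_at J 0 Ag)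
  (acts_on_marked_train_tail J n Ag (ltn0Sn 0))) _ _.
Qed.

Lemma frame_trip_chain U D x0 : frame_trip (chain U D x0) 0 = x0.
Proof.
by rewrite /frame_trip /= !(chainE _ _ _ 0); eval_div14; rewrite /chain_cell /= trip_eta.
Qed.

Lemma upper_lane_chain U D x0 : chain U D x0 4 = U 0.
Proof. by rewrite /chain; eval_div14. Qed.

Definition marker_config : C :=
  chain (fun k => if k =? 0 then one else zero) (fun _ => zero) (enc one zero 0).

Lemma marked_marker_config J : 0 < J -> marked J marker_config.
Proof.
move=> J_gt0; split; first exact: (frame_chain0 _ _ _ 0).
move=> q; rewrite belt_pow_chain upper_lane_chain.
case: q => [|q] /=; first by rewrite eqxx.
have -> : (0 - - (Z.of_nat q.+1 * J) =? 0) = false by apply/Z.eqb_neq; nia.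
by rewrite eq_sym (negbTE one_neq_zero).
Qed.

Definition realizes (D : (C -> C) -> Prop) (J : Z) (g : perm5) :=
  exists k k', [/\ D k, cancel k k', cancel k' k & acts_on_marked J k (act one zero g)].

Lemma realizes_commutator D J x y : x \in A5 -> y \in A5 ->
  realizes D J x -> realizes D J y -> realizes (derived D) J (pcomm x y).
Proof.
move=> Ax Ay [kx [kx' [Dx xK xK' ax]]] [ky [ky' [Dy yK yK' ay]]].
exists ((kx' \o ky' \o kx \o ky) \o id), ((ky' \o kx' \o ky \o kx) \o id); split.
- by apply: (gen_mul _ (gen_id _)); exists kx, kx', ky, ky'.
- by move=> c /=; rewrite xK' yK' xK yK.
- by move=> c /=; rewrite yK' xK' yK xK.
have ax' := acts_on_marked_inv ax xK xK' (fun v => act_pinvK one_neq_zero v Ax).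
have ay' := acts_on_marked_inv ay yK yK' (fun v => act_pinvK one_neq_zero v Ay).
apply: acts_on_marked_ext (acts_on_marked_comp (acts_on_marked_comp
  (acts_on_marked_comp (acts_on_marked_comp ax' ay') ax) ay) (acts_on_marked_id J)) _ _ => // v.
by rewrite /pcomm !act_comp ?A5_valid ?A5_mul ?A5_pinv.
Qed.

Section FiniteIndex.
Variable K : (C -> C) -> Prop.
Hypothesis K_subgroup : is_subgroup K.
Hypothesis K_finite_index : finite_index K G.

Lemma finite_index_belt_period : exists2 J, 0 < J & K (belt_pow J).
Proof.
case: K_subgroup => _ [K_mul K_inv].
have [N1 [N2 [r [k1 [k2 [lt Kk1 Kk2 e1 e2]]]]]] :=
  finite_index_collision (hN := fun N => belt_pow (Z.of_nat N)) K_finite_index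
    (fun N => gen_belt_pow _).
have [k1' [k1K [k1K' Kk1']]] := K_inv _ Kk1.
exists (Z.of_nat (N2 - N1)); first lia.
suff -> : belt_pow (Z.of_nat (N2 - N1)) = k1' \o k2 by exact: K_mul.
apply: functional_extensionality => c; symmetry.
apply: (same_coset_quotient (r := r) k1K k1K' (can_inj (belt_powK (Z.of_nat N1)))) => d.
  by rewrite -e1.
rewrite /= -belt_pow_add (_ : Z.of_nat N1 + Z.of_nat (N2 - N1) = Z.of_nat N2); last lia.
by rewrite e2.
Qed.

Lemma subgroup_belt_pow_mul J : K (belt_pow J) ->
  forall q : nat, K (belt_pow (Z.of_nat q * J)) /\ K (belt_pow (- (Z.of_nat q * J))).
Proof.
case: K_subgroup => K_id [K_mul K_inv] KJ.
have Kpos q : K (belt_pow (Z.of_nat q * J)).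
  elim: q => [|q IH]; first exact: K_id.
  suff -> : belt_pow (Z.of_nat q.+1 * J) = belt_pow J \o belt_pow (Z.of_nat q * J) by exact: K_mul.
  rewrite (_ : Z.of_nat q.+1 * J = J + Z.of_nat q * J); last lia.
  by apply: functional_extensionality => c; exact: belt_pow_add.
move=> q; split=> //; have [k' [kK [kK' Kk']]] := K_inv _ (Kpos q).
suff -> : belt_pow (- (Z.of_nat q * J)) = k' by [].
by apply: functional_extensionality => c; rewrite -[LHS]kK belt_powKV.
Qed.

(* The train [controlled_train J g 0 n] lies in G; two trains in the same coset of K
   differ by a train which, conjugated back to position 0, acts on marked
   configurations as [g]. *)
Lemma finite_index_realizes J : 0 < J -> K (belt_pow J) ->
  forall g, g \in A5 -> realizes K J g.
Proof.
case: K_subgroup => _ [K_mul K_inv] J_gt0 KJ g Ag.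
have [M1 [M2 [r [l1 [l2 [lt Kl1 Kl2 f1 f2]]]]]] :=
  finite_index_collision (hN := fun N => controlled_train J g 0 N) K_finite_index
    (fun N => gen_controlled_train J 0 N Ag).
have [l1' [l1K [l1K' Kl1']]] := K_inv _ Kl1.
have E d : l1' (l2 d) = controlled_train J g M1 (M2 - M1) d.
  apply: (same_coset_quotient (r := r) l1K l1K' (controlled_train_inj (b := 0) (n := M1) Ag))
    => {}d.
    by rewrite -f1.
  by rewrite -f2 -[in LHS](subnKC (ltnW lt)) controlled_train_cat.
set M := Z.of_nat M1 * J.
have [KM KM'] := subgroup_belt_pow_mul KJ M1.
set k := belt_pow (- M) \o (l1' \o l2) \o belt_pow M.
have Kk : K k := K_mul _ _ (K_mul _ _ KM' (K_mul _ _ Kl1' Kl2)) KM.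
have [k' [kK [kK' _]]] := K_inv _ Kk.
exists k, k'; split => //.
have train_pos : (0 < M2 - M1)%N by rewrite subn_gt0.
apply: acts_on_marked_ext (acts_on_marked_train J Ag train_pos) _ _ => // c.
by rewrite /k /= E -(controlled_train_conj J g M1 _ 0) add0n.
Qed.

Lemma derived_realizes J : 0 < J -> K (belt_pow J) ->
  forall n g, g \in A5 -> realizes (derived_iter n K) J g.
Proof.
move=> J_gt0 KJ; elim=> [|n IH] g Ag; first exact: finite_index_realizes.
have [x Ax [y Ay ->]] := A5_is_commutator Ag.
exact: realizes_commutator (IH x Ax) (IH y Ay).
Qed.

End FiniteIndex.

(* A 3-cycle realized in the solvable subgroup would move the point of frame 0 of
   [marker_config], yet the last derived subgroup is trivial. *)
Lemma not_virtually_solvable : ~ virtually_solvable G.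
Proof.
move=> [K [K_subgroup [_ [K_finite_index [n K_solvable]]]]].
have [J J_gt0 KJ] := finite_index_belt_period K_subgroup K_finite_index.
have A5g : [:: 1; 2; 0; 3; 4]%N \in A5 by [].
have [k [_ [Dk _ _ [_ _ ak]]]] := derived_realizes K_subgroup K_finite_index J_gt0 KJ n A5g.
have := ak _ (marked_marker_config J_gt0).
rewrite (K_solvable k Dk) /marker_config frame_trip_chain /act encK //= => E.
by have := enc1_neq_enc0 one_neq_zero; rewrite E eqxx.
Qed.

End Construction.

Theorem mainTheorem1 (Sigma : finType) (hSigma : 1 < #|Sigma|) :
  exists l : list (config Sigma -> config Sigma),
    (forall f, In f l -> is_aut f) /\
    ~ virtually_solvable (gen_list l) /\
    ~ contains_free2 (gen_list l).
Proof.
have [one [zero [_ _ one_neq_zero]]] : exists x y : Sigma, [/\ x \in Sigma, y \in Sigma & x != y].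
  exact/card_gt1P.
exists (generators one zero); split; [|split].
- move=> f /In_generators [->|[g Ag ->]]; first exact: is_aut_belt.
  exact: is_aut_controlled.
- exact: not_virtually_solvable.
- exact: no_free_subgroup.
Qed.
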